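(* Let $T$ be a rooted binary tree in which every internal node has exactly two children, with $n\ge1$ leaves. Let $E$ be the set of all seed letters of $T$ (subsets of nodes containing all leaves and closed under taking descendants), and let $\mathcal{I}\subseteq 2^E$ be the family of hierarchical seed alphabets, i.e. subsets $X\subseteq E$ totally ordered by inclusion. Then $\mathcal{I}$ is a constrained independence system, namely: (i) $\emptyset\in\mathcal{I}$; (ii) if $X\in\mathcal{I}$ and $Y\subseteq X$ then $Y\in\mathcal{I}$; (iii) if $X,Y\in\mathcal{I}$ with $|Y|<|X|$, then there exists $e\in E\setminus Y$ with $Y\cup\{e\}\in\mathcal{I}$; (iv) every inclusion-minimal set in $2^E\setminus\mathcal{I}$ has cardinality exactly two. *)

From HB Require Import structures.
From mathcomp Require Import all_boot.
Set Implicit Arguments. Unset Strict Implicit. Unset Printing Implicit Defensive.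

(* Full rooted binary trees: every internal node has exactly two children.
   Such a tree always has n >= 1 leaves. *)
Inductive btree : Type := Leaf | Node of btree & btree.

(* Nodes are addressed by their path from the root (false = left, true = right). *)
Fixpoint nodes (t : btree) : seq (seq bool) :=
  match t with
  | Leaf => [:: [::]]
  | Node l r => [::] :: (map (cons false) (nodes l) ++ map (cons true) (nodes r))
  end.

Fixpoint leaves (t : btree) : seq (seq bool) :=
  match t with
  | Leaf => [:: [::]]
  | Node l r => map (cons false) (leaves l) ++ map (cons true) (leaves r)
  end.

Definition node (t : btree) : finType := seq_sub (nodes t).

Definition descendant (t : btree) (u v : node t) : bool := prefix (val u) (val v).

Definition seed_letter (t : btree) (S : {set node t}) : bool :=
  [forall v : node t, (val v \in leaves t) ==> (v \in S)] &&
  [forall u : node t, forall v : node t, ((u \in S) && descendant u v) ==> (v \in S)].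

Definition seed_letters (t : btree) : {set {set node t}} :=
  [set S | seed_letter S].

Definition hierarchical (t : btree) (X : {set {set node t}}) : bool :=
  (X \subset seed_letters t) &&
  [forall A in X, forall B in X, (A \subset B) || (B \subset A)].

Definition hier_alphabets (t : btree) : {set {set {set node t}}} :=
  [set X | hierarchical X].

From HB Require Import structures.
From mathcomp Require Import all_boot.
Set Implicit Arguments. Unset Strict Implicit. Unset Printing Implicit Defensive.

(* Properties (i), (ii) and (iv) only use that the alphabets are the chains
   (for inclusion) of the family E of seed letters: chains are closed under
   subsets, and a minimal non-chain is a pair of incomparable sets.

   Property (iii) is the pure-rank property of chains of seed letters.  Let
   L be the size of the least seed letter (the intersection of all of them)
   and N the number of nodes.  Sets in a chain have pairwise distinct
   cardinalities, all in [L, N], so every chain has at most N + 1 - L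
   elements.  Conversely, between seed letters A ⊊ B one can always insert
   a seed letter of size |A| + 1 (add a deepest node of B \ A), so a chain
   that cannot be extended contains sets of every size in [L, N] and has at
   least N + 1 - L elements.  Hence a chain Y shorter than another chain X
   can be extended. *)

Section Chains.
Variable T : finType.

Definition chain (X : {set {set T}}) : bool :=
  [forall A in X, forall B in X, (A \subset B) || (B \subset A)].

Lemma chainP (X : {set {set T}}) :
  reflect (forall A B, A \in X -> B \in X -> (A \subset B) || (B \subset A))
          (chain X).
Proof.
apply: (iffP forall_inP) => [H A B HA HB | H A HA].
  by have /forall_inP := H A HA; apply.
by apply/forall_inP => B HB; apply: H.
Qed.

Lemma chain_sub (X Y : {set {set T}}) : chain X -> Y \subset X -> chain Y.
Proof.
by move=> /chainP cX /subsetP sYX; apply/chainP => A B /sYX HA /sYX; apply: cX.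
Qed.

Lemma not_chainP (X : {set {set T}}) : ~~ chain X ->
  exists A B, [/\ A \in X, B \in X & ~~ ((A \subset B) || (B \subset A))].
Proof.
by case/forall_inPn => A HA /forall_inPn[B HB nAB]; exists A, B.
Qed.

Definition sizes (X : {set {set T}}) : seq nat := map (fun A : {set T} => #|A|) (enum X).

Lemma size_sizes (X : {set {set T}}) : size (sizes X) = #|X|.
Proof. by rewrite size_map cardE. Qed.

(* Comparable sets of equal size are equal, so members of a chain are
   determined by their cardinality. *)
Lemma chain_sizes_uniq (X : {set {set T}}) : chain X -> uniq (sizes X).
Proof.
move=> /chainP cX; rewrite map_inj_in_uniq ?enum_uniq // => A B.
rewrite !mem_enum => HA HB eAB; apply/eqP.
case/orP: (cX A B HA HB) => sAB; first by rewrite eqEcard sAB eAB leqnn.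
by rewrite eq_sym eqEcard sAB eAB leqnn.
Qed.

Lemma chain_card_le (X : {set {set T}}) lo hi : chain X ->
  (forall S, S \in X -> lo <= #|S| <= hi) -> #|X| <= hi.+1 - lo.
Proof.
move=> cX bX; rewrite -size_sizes -[hi.+1 - lo](size_iota lo); apply: uniq_leq_size.
  exact: chain_sizes_uniq.
move=> m; rewrite /sizes => /mapP[C]; rewrite mem_enum => /bX /andP[loC Chi] ->.
by rewrite mem_iota subnKC ?loC ?ltnS // (leq_trans loC (leq_trans Chi _)).
Qed.

Lemma card_ge_all_sizes (X : {set {set T}}) lo hi :
  (forall k, lo <= k <= hi -> exists2 S, S \in X & #|S| = k) ->
  hi.+1 - lo <= #|X|.
Proof.
move=> allX; case: (leqP lo hi) => [lohi | hilo]; last first.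
  by move: hilo; rewrite -subn_eq0 => /eqP->.
rewrite -size_sizes -[hi.+1 - lo](size_iota lo); apply: uniq_leq_size.
  exact: iota_uniq.
move=> m; rewrite mem_iota subnKC ?ltnS => [/allX[C CX <-]|]; last exact: leqW.
by rewrite /sizes map_f ?mem_enum.
Qed.

Lemma chain_gap (X : {set {set T}}) S B : chain X -> S \in X -> B \in X ->
  (forall Z, Z \in X -> S \proper Z -> #|B| <= #|Z|) ->
  forall Z, Z \in X -> (Z \subset S) || (B \subset Z).
Proof.
move=> /chainP cX SX BX Bmin Z ZX.
case/orP: (cX Z S ZX SX) => [-> // | SZ].
case: (eqVneq S Z) => [<- | nSZ]; first by rewrite subxx.
have BZ : #|B| <= #|Z| by apply: Bmin; rewrite // properEneq nSZ.
case/orP: (cX Z B ZX BX) => [ZB | ->]; last by rewrite orbT.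
have /eqP-> : Z == B by rewrite eqEcard ZB BZ.
by rewrite subxx orbT.
Qed.

End Chains.

Section SeedLetters.
Variable t : btree.
Local Notation nt := (node t).
Local Notation E := (seed_letters t).
Local Notation I := (hier_alphabets t).

Lemma seedP (S : {set nt}) :
  reflect ((forall v : nt, val v \in leaves t -> v \in S) /\
           (forall u v : nt, u \in S -> descendant u v -> v \in S))
          (S \in E).
Proof.
rewrite inE; apply: (iffP andP) => [[/forallP H1 /forallP H2] | [H1 H2]]; split.
- by move=> v /(implyP (H1 v)).
- by move=> u v Hu Hd; have /forallP/(_ v)/implyP := H2 u; apply; rewrite Hu.
- by apply/forallP => v; apply/implyP; apply: H1.
- by apply/forallP => u; apply/forallP => v; apply/implyP => /andP[]; apply: H2.
Qed.

Lemma hierE (X : {set {set nt}}) : (X \in I) = (X \subset E) && chain X.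
Proof. by rewrite inE. Qed.

Lemma seedT : [set: nt] \in E.
Proof. by apply/seedP; split=> *; rewrite inE. Qed.

Definition bot : {set nt} := \bigcap_(S in E) S.

Lemma bot_sub S : S \in E -> bot \subset S.
Proof. exact: bigcap_inf. Qed.

(* Seed letters are closed under intersection, so bot is one. *)
Lemma seed_bot : bot \in E.
Proof.
apply/seedP; split.
- by move=> v Hv; apply/bigcapP => S /seedP[H1 _]; apply: H1.
- move=> u v /bigcapP Hu Hd; apply/bigcapP => S HS.
  by case/seedP: (HS) => _ H2; apply: H2 (Hu S HS) Hd.
Qed.

Lemma descendant_depth (u v : nt) :
  descendant u v -> size (val v) <= size (val u) -> u = v.
Proof.
rewrite /descendant prefixE => /eqP uv vu; apply: val_inj.
have uv_size : size (val u) = size (val v).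
  by apply/eqP; rewrite eqn_leq vu -uv size_take geq_minr.
by rewrite -uv uv_size take_size.
Qed.

(* Adding to a seed letter A ⊆ B a deepest node v of B \ A gives a seed
   letter: the descendants of v in B are v itself or already lie in A. *)
Lemma seed_add_deepest (A B : {set nt}) (v : nt) :
  A \in E -> B \in E -> v \in B :\: A ->
  (forall w, w \in B :\: A -> size (val w) <= size (val v)) ->
  v |: A \in E.
Proof.
move=> /seedP[leafA closA] /seedP[_ closB] /setDP[vB _] deepest.
apply/seedP; split=> [w Hw | u w]; first by rewrite in_setU1 leafA ?orbT.
rewrite !in_setU1 => /orP[/eqP-> vw | uA uw]; last by rewrite (closA u) ?orbT.
case wA: (w \in A); first by rewrite orbT.
have wBA : w \in B :\: A by rewrite inE wA (closB v).
by rewrite (descendant_depth vw (deepest w wBA)) eqxx.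
Qed.

Lemma seed_step A B : A \in E -> B \in E -> A \proper B ->
  exists e, [/\ e \in E, A \subset e, e \subset B & #|e| = #|A|.+1].
Proof.
move=> HA HB /properP[sAB [v0 v0B v0A]].
have v0BA : v0 \in B :\: A by rewrite inE v0A v0B.
case: (arg_maxnP (fun v : nt => size (val v)) v0BA) => v vBA deepest.
exists (v |: A); split.
- exact: seed_add_deepest vBA deepest.
- exact: subsetUr.
- by case/setDP: vBA => vB _; rewrite subUset sub1set vB.
- by case/setDP: vBA => _ vA; rewrite cardsU1 vA.
Qed.

Definition L := #|bot|.
Definition N := #|nt|.

Lemma hier_card_le X : X \in I -> #|X| <= N.+1 - L.
Proof.
rewrite hierE => /andP[/subsetP sXE cX]; apply: chain_card_le cX _ => S SX.
by rewrite max_card andbT subset_leq_card // bot_sub // sXE.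
Qed.

Definition maximal_hier (Y : {set {set nt}}) : Prop :=
  Y \in I /\ forall e, e \in E -> e \notin Y -> e |: Y \notin I.

Lemma maximal_hier_closed Y : maximal_hier Y ->
  forall e, e \in E -> (forall Z, Z \in Y -> (Z \subset e) || (e \subset Z)) ->
  e \in Y.
Proof.
case=> HY noext e eE ecomp; apply/negPn/negP => eY; case/negP: (noext e eE eY).
move: HY; rewrite !hierE => /andP[sYE /chainP cY].
rewrite subUset sub1set eE sYE; apply/chainP => A B.
rewrite !in_setU1 => /orP[/eqP-> | AY] /orP[/eqP-> | BY].
- by rewrite subxx.
- by rewrite orbC ecomp.
- exact: ecomp.
- exact: cY.
Qed.

Lemma maximal_hier_bot Y : maximal_hier Y -> bot \in Y.
Proof.
move=> Ymax; apply: (maximal_hier_closed Ymax) seed_bot _ => Z ZY.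
case: Ymax => HY _; move: HY; rewrite hierE => /andP[/subsetP sYE _].
by rewrite bot_sub ?orbT ?sYE.
Qed.

(* In a maximal alphabet, every letter S other than the full set of nodes is
   followed by a letter of size |S| + 1: insert a seed letter between S and
   the next letter B of the chain; it is comparable to every letter. *)
Lemma maximal_hier_succ Y S : maximal_hier Y -> S \in Y -> #|S| < N ->
  exists2 e, e \in Y & #|e| = #|S|.+1.
Proof.
move=> Ymax SY ltSN; have closY := maximal_hier_closed Ymax.
case: (Ymax) => HY _; move: HY; rewrite hierE => /andP[/subsetP sYE cY].
have T_above_S : [set: nt] \in [pred Z | (Z \in Y) && (S \proper Z)].
  rewrite inE properT (closY _ seedT) => [|Z _]; last by rewrite subsetT.
  by apply: contraTneq ltSN => ->; rewrite cardsT ltnn.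
case: (arg_minnP (fun Z : {set nt} => #|Z|) T_above_S) => B /andP[BY SB] Bmin.
have [e [eE Se eB cardE]] := seed_step (sYE _ SY) (sYE _ BY) SB.
exists e => //; apply: closY eE _ => Z ZY.
have B_next Z' : Z' \in Y -> S \proper Z' -> #|B| <= #|Z'|.
  by move=> Z'Y SZ'; apply: Bmin; apply/andP.
case/orP: (chain_gap cY SY BY B_next ZY) => [ZS | BZ].
  by rewrite (subset_trans ZS Se).
by rewrite (subset_trans eB BZ) orbT.
Qed.

Lemma maximal_hier_sizes Y : maximal_hier Y ->
  forall k, L <= k <= N -> exists2 S, S \in Y & #|S| = k.
Proof.
move=> Ymax k /andP[Lk]; rewrite -(subnKC Lk); elim: (k - L) => [|i IH] Hi.
  by exists bot; rewrite ?addn0 ?maximal_hier_bot.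
have [S SY cardS] : exists2 S, S \in Y & #|S| = L + i.
  by apply: IH; rewrite (leq_trans _ Hi) // leq_add2l.
by rewrite addnS -cardS; apply: maximal_hier_succ; rewrite // cardS -addnS.
Qed.

Lemma maximal_hier_card Y : maximal_hier Y -> N.+1 - L <= #|Y|.
Proof. by move=> Ymax; apply: card_ge_all_sizes; apply: maximal_hier_sizes. Qed.

End SeedLetters.

Theorem mainTheorem3 (T : btree) :
  let E := seed_letters T in
  let I := hier_alphabets T in
  (* (i) *) set0 \in I /\
  (* (ii) *) (forall X Y : {set {set node T}}, X \in I -> Y \subset X -> Y \in I) /\
  (* (iii) *) (forall X Y : {set {set node T}}, X \in I -> Y \in I -> #|Y| < #|X| ->
                exists2 e, e \in E :\: Y & e |: Y \in I) /\
  (* (iv) *) (forall X : {set {set node T}},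
                minset (fun Z : {set {set node T}} => (Z \subset E) && (Z \notin I)) X ->
                #|X| = 2).
Proof.
move=> E I; split; [|split; [|split]].
- by rewrite hierE sub0set; apply/chainP => A B; rewrite inE.
- move=> X Y; rewrite !hierE => /andP[sXE cX] sYX.
  by rewrite (subset_trans sYX sXE) (chain_sub cX sYX).
- move=> X Y HX HY ltYX; apply/exists_inP; apply: contraTT ltYX => noext.
  have Ymax : maximal_hier Y.
    split=> // e eE eY; apply: contra noext => eYI.
    by apply/exists_inP; exists e; rewrite // inE eY.
  by rewrite -leqNgt (leq_trans (hier_card_le HX) (maximal_hier_card Ymax)).
- move=> X /minsetP[/andP[sXE nXI] Xmin].
  have [A [B [AX BX nAB]]] : exists A B, [/\ A \in X, B \in X &
      ~~ ((A \subset B) || (B \subset A))].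
    by apply: not_chainP; move: nXI; rewrite hierE sXE.
  have sABX : [set A; B] \subset X by rewrite subUset !sub1set AX BX.
  have <- : [set A; B] = X.
    apply: (Xmin _ _ sABX); rewrite hierE (subset_trans sABX sXE) /=.
    by apply: contra nAB => /chainP; apply; rewrite !inE eqxx ?orbT.
  by rewrite cards2; case: eqP nAB => // ->; rewrite subxx.
Qed.
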